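(* Let $G$ be a finite abelian group and $G_0\subseteq G$. Then $c_{\mathrm{gr}}(\mathcal{B}(G_0))\le2\,\mathsf{d}(G_0)+2\le2\,\mathsf{D}(G)\le2|G|$.
   Context: $G$ is written multiplicatively. $\mathcal{B}(G_0)=\{\alpha\in\mathbb{N}_0^{G_0}\mid\prod_{g\in G_0}g^{\alpha(g)}=1\}$, graded by $|\alpha|=\sum_g\alpha(g)$; it is a connected graded reduced affine monoid with finite atom set $\mathcal{A}(\mathcal{B}(G_0))$. Graded catenary degree: for $\alpha,\gamma\in\mathbb{N}_0^{\mathcal{A}}$ ($\mathcal{A}=\mathcal{A}(\mathcal{B}(G_0))$) let $a^{\alpha}=\sum_a\alpha(a)a$, $|\alpha|_{\mathrm{gr}}=\sum_a\alpha(a)|a|$, $\gcd(\alpha,\gamma)(a)=\min\{\alpha(a),\gamma(a)\}$, $d_{\mathrm{gr}}(\alpha,\gamma)=\max\{|\alpha-\gcd|_{\mathrm{gr}},|\gamma-\gcd|_{\mathrm{gr}}\}$; $c_{\mathrm{gr}}$ is the minimal $d$ such that whenever $a^{\alpha}=a^{\gamma}$ there is a chain $\alpha=\alpha^{(0)},\dots,\alpha^{(k)}=\gamma$ with $a^{\alpha^{(j)}}=a^{\alpha^{(j+1)}}$ and $d_{\mathrm{gr}}(\alpha^{(j)},\alpha^{(j+1)})\le d$. $\mathsf{d}(G_0)$ is the maximal length of a sequence over $G_0$ containing no nonempty product-one subsequence (equivalently the maximal $|\alpha|$, $\alpha\in\mathbb{N}_0^{G_0}$, with no atom $\gamma$ of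 $\mathcal{B}(G_0)$ satisfying $\gamma\le\alpha$ pointwise). $\mathsf{D}(G)=\max\{|\alpha|:\alpha\in\mathcal{A}(\mathcal{B}(G))\}$ is the Davenport constant. *)

From mathcomp Require Import all_boot all_fingroup.
Set Implicit Arguments. Unset Strict Implicit. Unset Printing Implicit Defensive.

Section Defs.
Variable gT : finGroupType.

(* A sequence over gT as a multiplicity function alpha : gT -> N_0. *)
Definition seqT := {ffun gT -> nat}.

Definition gsize (a : seqT) : nat := \sum_(g : gT) a g.

Definition over (G0 : {set gT}) (a : seqT) : Prop := forall g, g \notin G0 -> a g = 0.

(* product of alpha: prod_g g^(alpha g) (the group is abelian on the support) *)
Definition seqprod (a : seqT) : gT := (\prod_(g : gT) g ^+ a g)%g.

Definition inB (G0 : {set gT}) (a : seqT) : Prop := over G0 a /\ seqprod a = 1%g.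

Definition seq_le (b a : seqT) : Prop := forall g, b g <= a g.
Definition is_zero (a : seqT) : Prop := forall g, a g = 0.

Definition atomB (G0 : {set gT}) (a : seqT) : Prop :=
  inB G0 a /\ ~ is_zero a /\
  forall b c : seqT, inB G0 b -> inB G0 c -> (forall g, a g = b g + c g) ->
    is_zero b \/ is_zero c.

(* a factorization of alpha: a finite multiset of atoms (a seq) summing to alpha *)
Definition factorization (G0 : {set gT}) (a : seqT) (z : seq seqT) : Prop :=
  (forall x, x \in z -> atomB G0 x) /\ (forall g, a g = \sum_(x <- z) x g).

(* |z - gcd(z,z')|_gr *)
Definition rem_len (z z' : seq seqT) : nat :=
  \sum_(x <- undup z) (count_mem x z - count_mem x z') * gsize x.

Definition d_gr (z z' : seq seqT) : nat := maxn (rem_len z z') (rem_len z' z).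

Definition gr_catenary (G0 : {set gT}) (d : nat) : Prop :=
  forall (a : seqT) (z z' : seq seqT),
    factorization G0 a z -> factorization G0 a z' ->
    exists (k : nat) (w : nat -> seq seqT),
      [/\ w 0 = z, w k = z',
          (forall j, j <= k -> factorization G0 a (w j)) &
          (forall j, j < k -> d_gr (w j) (w j.+1) <= d)].

Definition is_cgr (G0 : {set gT}) (c : nat) : Prop :=
  gr_catenary G0 c /\ forall d, gr_catenary G0 d -> c <= d.

Definition zs_free (G0 : {set gT}) (a : seqT) : Prop :=
  over G0 a /\ forall b : seqT, seq_le b a -> seqprod b = 1%g -> is_zero b.

Definition is_small_d (G0 : {set gT}) (n : nat) : Prop :=
  (exists a, zs_free G0 a /\ gsize a = n) /\
  (forall a, zs_free G0 a -> gsize a <= n).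

Definition is_davenport (G : {set gT}) (n : nat) : Prop :=
  (exists a, atomB G a /\ gsize a = n) /\
  (forall a, atomB G a -> gsize a <= n).

End Defs.

From Pilot Require Import Defs.
From mathcomp Require Import all_boot all_fingroup.
From mathcomp Require Import zify.
From Stdlib Require Import Classical.
Set Implicit Arguments. Unset Strict Implicit. Unset Printing Implicit Defensive.

(* Let d bound the length of zero-sum free sequences over G0; then every atom has
   length at most d + 1 and every sequence of length d + 1 contains an atom.
   Two factorizations of a are chained by strong induction on |a|.  If
   |a| <= 2d + 2, one step suffices.  Otherwise it is enough to link atoms x, x'
   of a, i.e. to chain any factorization containing x to any containing x'
   (factorizations sharing an atom are chained by induction on a - x).  If x + x'
   fits in a, both occur in one factorization.  If not, since |a| > 2d + 2 the
   complements a - x and a - x' contain atoms t, t' of length at most d + 1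
   whose overlap in a is strictly smaller than that of x and x', and x ~ t ~ t'
   ~ x' by induction on the overlap.  Finally d < D because appending the
   inverse of its product to a zero-sum free sequence gives an atom, and
   D <= |G| by the pigeonhole principle on the prefix products of a sequence. *)

Section SeqArithmetic.
Variable gT : finGroupType.
Implicit Types (a b c x y V W : seqT gT) (u : gT).

Definition seq0 : seqT gT := [ffun=> 0].
Definition seq1 u : seqT gT := [ffun g => nat_of_bool (g == u)].
Definition seq_add a b : seqT gT := [ffun g => a g + b g].
Definition seq_diff a b : seqT gT := [ffun g => a g - b g].
Definition seq_sum (z : seq (seqT gT)) : seqT gT := [ffun g => \sum_(x <- z) x g].
Definition overlap a x y : seqT gT := [ffun g => x g + y g - a g].

(* Unlike a bare [ffunP], this leaves both sides of each pointwise goal with the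
   same form of [_ g], which [lia] needs to identify them as one atom. *)
Lemma seq_ext a b : (forall g, a g = b g) -> a = b.
Proof. by move=> eq_ab; apply/ffunP. Qed.

Lemma seq_le_refl a : seq_le a a.
Proof. by []. Qed.

Lemma seq_le_trans a b c : seq_le a b -> seq_le b c -> seq_le a c.
Proof. by move=> le_ab le_bc g; apply: leq_trans (le_ab g) (le_bc g). Qed.

Lemma seq_le_diff a b : seq_le (seq_diff a b) a.
Proof. by move=> g; rewrite ffunE leq_subr. Qed.

Lemma seq1_le u a : 0 < a u -> seq_le (seq1 u) a.
Proof. by move=> au_gt0 g; rewrite ffunE; case: eqP => // ->. Qed.

Lemma seq_diffK a b : seq_le b a -> seq_add b (seq_diff a b) = a.
Proof. by move=> le_ba; apply: seq_ext => g; rewrite !ffunE subnKC. Qed.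

Lemma seq_sum_nil : seq_sum [::] = seq0.
Proof. by apply: seq_ext => g; rewrite !ffunE big_nil. Qed.

Lemma seq_sum_cons x z : seq_sum (x :: z) = seq_add x (seq_sum z).
Proof. by apply: seq_ext => g; rewrite !ffunE big_cons. Qed.

Lemma gsize_add a b : gsize (seq_add a b) = gsize a + gsize b.
Proof. by rewrite /gsize -big_split; apply: eq_bigr => g _; rewrite ffunE. Qed.

Lemma gsize_diff a b : seq_le b a -> gsize (seq_diff a b) = gsize a - gsize b.
Proof. by move=> le_ba; rewrite -{2}(seq_diffK le_ba) gsize_add addKn. Qed.

Lemma leq_gsize a b : seq_le b a -> gsize b <= gsize a.
Proof. by move=> le_ba; apply: leq_sum => g _. Qed.

Lemma gsize0 : gsize seq0 = 0.
Proof. by rewrite /gsize big1 // => g _; rewrite ffunE. Qed.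

Lemma gsize1 u : gsize (seq1 u) = 1.
Proof.
rewrite /gsize (bigD1 u) //= big1 ?ffunE ?eqxx // => g /negbTE gu.
by rewrite ffunE gu.
Qed.

Lemma gsize_sum z : gsize (seq_sum z) = \sum_(x <- z) gsize x.
Proof.
elim: z => [|x z IHz]; first by rewrite seq_sum_nil gsize0 big_nil.
by rewrite seq_sum_cons gsize_add IHz big_cons.
Qed.

Lemma gsize_eq0 a : gsize a = 0 <-> is_zero a.
Proof.
split=> [/eqP | a0]; last by rewrite /gsize big1.
by rewrite sum_nat_eq0 => /forallP a0 g; apply/eqP; apply: a0.
Qed.

Lemma gsize_gt0 a : ~ is_zero a -> 0 < gsize a.
Proof. by move=> a_nz; rewrite lt0n; apply/eqP => /gsize_eq0. Qed.

Lemma nonzero_support a : ~ is_zero a -> exists g, 0 < a g.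
Proof.
move=> a_nz; apply: NNPP => no_support; apply: a_nz => g.
by apply/eqP; rewrite -leqn0 leqNgt; apply/negP => ag; apply: no_support; exists g.
Qed.

Lemma seq_le_gsize_exists W n : n <= gsize W -> exists V, seq_le V W /\ gsize V = n.
Proof.
elim: n => [|n IHn] n_le.
  by exists seq0; split; [move=> g; rewrite ffunE | exact: gsize0].
have [V [le_VW szV]] := IHn (ltnW n_le).
have [g ltVW] : exists g, V g < W g.
  apply: NNPP => V_full; suff : gsize W <= gsize V by lia.
  apply: leq_gsize => g; rewrite leqNgt; apply/negP => ?; by apply: V_full; exists g.
exists (seq_add V (seq1 g)); rewrite gsize_add gsize1 szV addn1; split=> // h.
by rewrite !ffunE; case: eqP => [->|_]; [rewrite addn1 | rewrite addn0 le_VW].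
Qed.

Lemma seq_le_pair_overlap W n1 n2 : n1 <= gsize W -> n2 <= gsize W ->
  exists W1 W2, [/\ seq_le W1 W, seq_le W2 W, gsize W1 = n1, gsize W2 = n2 &
    gsize (overlap W W1 W2) <= n1 + n2 - gsize W].
Proof.
move=> n1_le n2_le; have [V1 [le_V1W szV1]] := seq_le_gsize_exists n1_le.
have szWV1 : gsize (seq_diff W V1) = gsize W - n1 by rewrite gsize_diff ?szV1.
have [disjoint|meet] := leqP n2 (gsize W - n1).
  have [V2 [le_V2 szV2]] : exists V2, seq_le V2 (seq_diff W V1) /\ gsize V2 = n2.
    by apply: seq_le_gsize_exists; rewrite szWV1.
  exists V1, V2; split=> //; first exact: seq_le_trans le_V2 (seq_le_diff _ _).
  suff /gsize_eq0 -> : is_zero (overlap W V1 V2) by [].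
  by move=> g; have := le_V2 g; have := le_V1W g; rewrite !ffunE; lia.
have [E [le_EV1 szE]] : exists E, seq_le E V1 /\ gsize E = n2 - (gsize W - n1).
  by apply: seq_le_gsize_exists; rewrite szV1; lia.
exists V1, (seq_add (seq_diff W V1) E); split=> //.
- by move=> g; have := le_EV1 g; have := le_V1W g; rewrite !ffunE; lia.
- by rewrite gsize_add szWV1 szE; lia.
- suff -> : overlap W V1 (seq_add (seq_diff W V1) E) = E by rewrite szE; lia.
  by apply: seq_ext => g; have := le_EV1 g; have := le_V1W g; rewrite !ffunE; lia.
Qed.

Lemma overlap_eq0 a x y : gsize (overlap a x y) = 0 -> seq_le (seq_add x y) a.
Proof. by move=> /gsize_eq0 xy0 g; have := xy0 g; rewrite !ffunE; lia. Qed.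

Lemma leq_gsize_overlap a x x' y y' : seq_le x y -> seq_le x' y' ->
  gsize (overlap a x x') <= gsize (overlap a y y').
Proof.
move=> le_xy le_xy'; apply: leq_gsize => g.
by have := le_xy g; have := le_xy' g; rewrite !ffunE; lia.
Qed.

(* Write a = h + P + P' + W with h = overlap a x x', x = h + P' and x' = h + P.
   The complements a - x = P + W and a - x' = P' + W are filled up to size n
   with two pieces of W, whose overlap is smaller than h because |a| > 2n. *)
Lemma overlap_exchange a x x' n :
  seq_le x a -> seq_le x' a -> gsize x <= n -> gsize x' <= n -> 2 * n < gsize a ->
  0 < gsize (overlap a x x') ->
  exists A A', [/\ seq_le (seq_add x A) a, seq_le (seq_add A' x') a,
    gsize A = n, gsize A' = n & gsize (overlap a A A') < gsize (overlap a x x')].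
Proof.
move=> le_xa le_x'a szx szx' long h_gt0.
set h := overlap a x x' in h_gt0 *.
pose P := seq_diff x' h; pose P' := seq_diff x h.
pose W := seq_diff (seq_diff a x) P.
have decomp_a : a = seq_add (seq_add (seq_add h P) P') W.
  by apply: seq_ext => g; have := le_xa g; have := le_x'a g; rewrite !ffunE; lia.
have decomp_x : x = seq_add h P'.
  by apply: seq_ext => g; have := le_xa g; have := le_x'a g; rewrite !ffunE; lia.
have decomp_x' : x' = seq_add h P.
  by apply: seq_ext => g; have := le_xa g; have := le_x'a g; rewrite !ffunE; lia.
have := congr1 (@gsize _) decomp_a; have := congr1 (@gsize _) decomp_x.
have := congr1 (@gsize _) decomp_x'; rewrite !gsize_add => sz_x' sz_x sz_a.
have [W1 [W2 [le_W1 le_W2 szW1 szW2 szW12]]] :=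
  @seq_le_pair_overlap W (n - gsize P) (n - gsize P') ltac:(lia) ltac:(lia).
exists (seq_add P W1), (seq_add P' W2); split.
- by move=> g; have := le_W1 g; have := le_xa g; have := le_x'a g; rewrite !ffunE; lia.
- by move=> g; have := le_W2 g; have := le_xa g; have := le_x'a g; rewrite !ffunE; lia.
- by rewrite gsize_add szW1; lia.
- by rewrite gsize_add szW2; lia.
- suff : gsize (overlap a (seq_add P W1) (seq_add P' W2)) <= gsize (overlap W W1 W2).
    by lia.
  apply: leq_gsize => g; have := le_W1 g; have := le_W2 g.
  by have := le_xa g; have := le_x'a g; rewrite !ffunE; lia.
Qed.

End SeqArithmetic.

Section AbelianProducts.
Variables (gT : finGroupType) (G : {group gT}).
Hypothesis abG : abelian G.
Implicit Types a b : seqT gT.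

Lemma seqprod0 : seqprod (seq0 gT) = 1%g.
Proof. by rewrite /seqprod big1 // => g _; rewrite ffunE. Qed.

Lemma seqprod1 (u : gT) : seqprod (seq1 u) = u.
Proof.
rewrite /seqprod (eq_bigr (fun g => if g == u then g else 1%g)).
  by rewrite -big_mkcond big_pred1_eq.
by move=> g _; rewrite ffunE; case: eqP.
Qed.

Lemma over_seq1 (u : gT) : u \in G -> Defs.over G (seq1 u).
Proof. by move=> uG g; rewrite ffunE; case: eqP => // ->; rewrite uG. Qed.

Lemma over_powg a g : Defs.over G a -> (g ^+ a g)%g \in G.
Proof.
move=> aG; have [gG|gNG] := boolP (g \in G); first exact: groupX.
by rewrite aG // group1.
Qed.

Lemma seqprod_in a : Defs.over G a -> seqprod a \in G.
Proof. by move=> aG; apply: group_prod => g _; apply: over_powg. Qed.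

Lemma seqprod_add a b : Defs.over G a -> Defs.over G b ->
  seqprod (seq_add a b) = (seqprod a * seqprod b)%g.
Proof.
move=> aG bG; rewrite /seqprod -prodgM_commute; last first.
  by move=> g h _ _; apply: (centsP abG); apply: over_powg.
by apply: eq_bigr => g _; rewrite ffunE expgD.
Qed.

End AbelianProducts.

Section Factorizations.
Variables (gT : finGroupType) (G0 : {set gT}).
Implicit Types (a b x : seqT gT) (z : seq (seqT gT)).

Lemma factorizationE a z :
  factorization G0 a z <-> (forall x, x \in z -> atomB G0 x) /\ a = seq_sum z.
Proof.
split=> [[atoms sum_z] | [atoms ->]]; split=> //; last by move=> g; rewrite ffunE.
by apply: seq_ext => g; rewrite ffunE sum_z.
Qed.

Lemma factorization_gsize a z : factorization G0 a z -> \sum_(x <- z) gsize x = gsize a.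
Proof. by move=> /factorizationE [_ ->]; rewrite gsize_sum. Qed.

Lemma factorization_mem a z x : factorization G0 a z -> x \in z ->
  atomB G0 x /\ seq_le x a.
Proof.
move=> /factorizationE [atoms ->] xz; split; first exact: atoms.
by move=> g; rewrite ffunE (big_rem x xz) leq_addr.
Qed.

Lemma factorization_perm a z z' : perm_eq z z' ->
  factorization G0 a z -> factorization G0 a z'.
Proof.
move=> pzz' [atoms sum_z]; split=> [x|g]; first by rewrite -(perm_mem pzz'); apply: atoms.
by rewrite sum_z (perm_big _ pzz').
Qed.

Lemma factorization_cons a x z : atomB G0 x -> seq_le x a ->
  factorization G0 (seq_diff a x) z -> factorization G0 a (x :: z).
Proof.
move=> x_atom le_xa [atoms sum_z]; split=> [y|g].
  by rewrite inE => /predU1P [-> | /atoms].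
by rewrite big_cons -sum_z ffunE subnKC.
Qed.

Lemma factorization_rem a z x : factorization G0 a z -> x \in z ->
  factorization G0 (seq_diff a x) (rem x z).
Proof.
move=> fz xz; have [atoms sum_z] := factorization_perm (perm_to_rem xz) fz.
split=> [y /mem_rem|g]; first exact: (proj1 fz).
by rewrite ffunE sum_z big_cons addKn.
Qed.

End Factorizations.

Section BlockMonoid.
Variables (gT : finGroupType) (G : {group gT}) (G0 : {set gT}).
Hypotheses (abG : abelian G) (sG0 : G0 \subset G).
Implicit Types (a b c t x : seqT gT).

Lemma over_subset a : Defs.over G0 a -> Defs.over G a.
Proof. by move=> aG0 g gNG; apply: aG0; apply: contra gNG; apply: (subsetP sG0). Qed.

Lemma over_le a b : seq_le b a -> Defs.over G0 a -> Defs.over G0 b.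
Proof. by move=> le_ba aG0 g /aG0 a0; apply/eqP; rewrite -leqn0 -a0. Qed.

Lemma inB0 : inB G0 (seq0 gT).
Proof. by split; [move=> g _; rewrite ffunE | exact: seqprod0]. Qed.

Lemma inB_add a b : inB G0 a -> inB G0 b -> inB G0 (seq_add a b).
Proof.
move=> [aG0 a1] [bG0 b1]; split; first by move=> g gNG0; rewrite ffunE aG0 ?bG0.
by rewrite (seqprod_add abG (over_subset aG0) (over_subset bG0)) a1 b1 mulg1.
Qed.

Lemma inB_diff a b : inB G0 a -> seq_le b a -> inB G0 b -> inB G0 (seq_diff a b).
Proof.
move=> [aG0 a1] le_ba [bG0 b1].
have abG0 : Defs.over G0 (seq_diff a b) := over_le (seq_le_diff a b) aG0.
split=> //; have := seqprod_add abG (over_subset bG0) (over_subset abG0).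
by rewrite seq_diffK // a1 b1 mul1g.
Qed.

Lemma inB_sum z : (forall x, x \in z -> atomB G0 x) -> inB G0 (seq_sum z).
Proof.
elim: z => [|x z IHz] atoms; first by rewrite seq_sum_nil; apply: inB0.
rewrite seq_sum_cons; apply: inB_add; first by have [] := atoms x (mem_head _ _).
by apply: IHz => y yz; apply: atoms; rewrite inE yz orbT.
Qed.

Lemma atom_neq0 x : atomB G0 x -> ~ is_zero x.
Proof. by case=> _ []. Qed.

Lemma atom_gsize_gt0 x : atomB G0 x -> 0 < gsize x.
Proof. by move/atom_neq0/gsize_gt0. Qed.

Lemma inB_atom_le b : inB G0 b -> ~ is_zero b -> exists t, atomB G0 t /\ seq_le t b.
Proof.
have [n] := ubnP (gsize b); elim: n b => // n IHn b szb bB b_nz.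
have [b_atom|b_natom] := classic (atomB G0 b).
  by exists b; split; last exact: seq_le_refl.
have [c [e [cB eB b_ce [c_nz e_nz]]]] : exists c e, [/\ inB G0 c, inB G0 e,
    (forall g, b g = c g + e g) & ~ is_zero c /\ ~ is_zero e].
  apply: NNPP => no_split; apply: b_natom; split=> //; split=> // c e cB eB b_ce.
  by apply: NNPP => ce_nz; apply: no_split; exists c, e; split=> //; tauto.
have le_cb : seq_le c b by move=> g; rewrite b_ce leq_addr.
have : gsize c < n.
  have := gsize_gt0 e_nz; have := leq_gsize le_cb.
  suff : gsize b = gsize c + gsize e by lia.
  by rewrite -gsize_add; congr gsize; apply: seq_ext => g; rewrite ffunE.
move=> /IHn /(_ cB c_nz) [t [t_atom le_tc]].
by exists t; split=> //; apply: seq_le_trans le_tc le_cb.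
Qed.

Lemma factorization_exists b : inB G0 b -> exists z, factorization G0 b z.
Proof.
have [n] := ubnP (gsize b); elim: n b => // n IHn b szb bB.
have [b0|b_nz] := classic (is_zero b).
  by exists [::]; split=> // g; rewrite big_nil b0.
have [t [t_atom le_tb]] := inB_atom_le bB b_nz.
have szbt : gsize (seq_diff b t) < n.
  by rewrite gsize_diff //; have := atom_gsize_gt0 t_atom; have := leq_gsize le_tb; lia.
have [z fz] := IHn _ szbt (inB_diff bB le_tb (proj1 t_atom)).
by exists (t :: z); apply: factorization_cons.
Qed.

Lemma atom_diff1_zs_free x g : atomB G0 x -> 0 < x g -> zs_free G0 (seq_diff x (seq1 g)).
Proof.
move=> [xB [_ x_irr]] xg_gt0; have le_x := seq_le_diff x (seq1 g).
split=> [|b le_b b1]; first exact: over_le le_x (proj1 xB).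
have le_bx := seq_le_trans le_b le_x.
have bB : inB G0 b by split=> //; apply: over_le le_bx (proj1 xB).
have x_split : forall h, x h = b h + seq_diff x b h by move=> h; rewrite ffunE subnKC.
have [|xb0] // := x_irr b (seq_diff x b) bB (inB_diff xB le_bx bB) x_split.
by have := xb0 g; have := le_b g; rewrite !ffunE eqxx; lia.
Qed.

Section ZeroSumFreeBound.
Variable n : nat.
Hypothesis zs_free_le : forall a, zs_free G0 a -> gsize a <= n.

Lemma long_seq_atom_le A : Defs.over G0 A -> n < gsize A ->
  exists t, atomB G0 t /\ seq_le t A.
Proof.
move=> AG0 long.
have [b [le_bA b1 b_nz]] : exists b, [/\ seq_le b A, seqprod b = 1%g & ~ is_zero b].
  apply: NNPP => no_zero_sum; suff /zs_free_le : zs_free G0 A by lia.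
  split=> // b le_bA b1; apply: NNPP => b_nz; apply: no_zero_sum; by exists b.
have [t [t_atom le_tb]] := inB_atom_le (conj (over_le le_bA AG0) b1) b_nz.
by exists t; split=> //; apply: seq_le_trans le_tb le_bA.
Qed.

Lemma atom_gsize_le x : atomB G0 x -> gsize x <= n.+1.
Proof.
move=> x_atom; have [g xg_gt0] := nonzero_support (atom_neq0 x_atom).
have := zs_free_le (atom_diff1_zs_free x_atom xg_gt0).
by rewrite gsize_diff ?gsize1; [lia | exact: seq1_le].
Qed.

End ZeroSumFreeBound.
End BlockMonoid.

Section GradedDistance.
Variable gT : finGroupType.
Implicit Types z : seq (seqT gT).

Lemma rem_lenE s z z' : uniq s -> {subset z <= s} ->
  rem_len z z' = \sum_(x <- s) (count_mem x z - count_mem x z') * gsize x.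
Proof.
move=> s_uniq sub_zs.
rewrite (bigID (mem z)) /= [X in _ + X]big1 ?addn0 => [|x /count_memPn -> //].
rewrite -big_filter /rem_len; apply/perm_big/uniq_perm.
- exact: undup_uniq.
- exact: filter_uniq.
- by move=> x; rewrite mem_undup mem_filter; case xz: (x \in z); rewrite //= sub_zs.
Qed.

Lemma d_gr_cons x z z' : d_gr (x :: z) (x :: z') = d_gr z z'.
Proof.
suff rem_len_cons (p q : seq (seqT gT)) : rem_len (x :: p) (x :: q) = rem_len p q.
  by rewrite /d_gr !rem_len_cons.
have s_uniq := undup_uniq (x :: p).
rewrite (@rem_lenE (undup (x :: p))) => [||y]; rewrite ?mem_undup //.
rewrite (@rem_lenE (undup (x :: p))) => [||y py]; rewrite ?mem_undup ?inE ?py ?orbT //.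
by apply: eq_bigr => y _ /=; rewrite subnDl.
Qed.

Lemma d_gr_perm z z' : perm_eq z z' -> d_gr z z' = 0.
Proof.
move=> /seq.permP count_eq.
by rewrite /d_gr /rem_len !big1 // => x _; rewrite count_eq subnn.
Qed.

Lemma d_gr_le z z' : \sum_(x <- z) gsize x = \sum_(x <- z') gsize x ->
  d_gr z z' <= \sum_(x <- z) gsize x.
Proof.
suff rem_len_le (p q : seq (seqT gT)) : rem_len p q <= \sum_(x <- p) gsize x.
  by move=> eq_sz; rewrite geq_max rem_len_le eq_sz rem_len_le.
rewrite -big_undup_iterop_count; apply: leq_sum => x _.
by rewrite Monoid.iteropE iter_addn_0 mulnC leq_mul // leq_subr.
Qed.

End GradedDistance.

Section Chains.
Variables (gT : finGroupType) (G0 : {set gT}) (N : nat).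
Implicit Types (a x : seqT gT) (z : seq (seqT gT)).

Inductive chain a : seq (seqT gT) -> seq (seqT gT) -> Prop :=
| chain_nil z : factorization G0 a z -> chain a z z
| chain_cons z y z' : factorization G0 a z -> d_gr z y <= N -> chain a y z' ->
    chain a z z'.

Lemma chain_trans a z y z' : chain a z y -> chain a y z' -> chain a z z'.
Proof.
by elim=> // {}z y0 z0 fz d_zy _ IHy /IHy; apply: chain_cons.
Qed.

Lemma chain_perm a z z' : factorization G0 a z -> perm_eq z z' -> chain a z z'.
Proof.
move=> fz pzz'; apply: (chain_cons (y := z') fz); first by rewrite d_gr_perm.
exact/chain_nil/(factorization_perm pzz').
Qed.

Lemma chain_cons_atom a x z z' : atomB G0 x -> seq_le x a ->
  chain (seq_diff a x) z z' -> chain a (x :: z) (x :: z').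
Proof.
move=> x_atom le_xa; elim=> [{}z fz | {}z y {}z' fz d_zy _ IHy].
  exact/chain_nil/factorization_cons.
by apply: (chain_cons (y := x :: y)); rewrite ?d_gr_cons //; apply: factorization_cons.
Qed.

Lemma chainP a z z' : chain a z z' ->
  exists (k : nat) (w : nat -> seq (seqT gT)),
    [/\ w 0 = z, w k = z', (forall j, j <= k -> factorization G0 a (w j)) &
        (forall j, j < k -> d_gr (w j) (w j.+1) <= N)].
Proof.
elim=> [{}z fz | {}z y {}z' fz d_zy _ [k [w [w0 wk fw dw]]]].
  by exists 0, (fun=> z); split=> // j _.
exists k.+1, (fun j => if j is j'.+1 then w j' else z).
by split=> // -[|j] /= lt_jk; rewrite ?w0 //; [apply: fw | apply: dw].
Qed.

End Chains.

Arguments chain_nil {gT G0 N a z}.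
Arguments chain_perm {gT G0 N a z z'}.

Section Catenary.
Variables (gT : finGroupType) (G : {group gT}) (G0 : {set gT}) (dd : nat).
Hypotheses (abG : abelian G) (sG0 : G0 \subset G).
Hypothesis zs_free_le : forall a, zs_free G0 a -> gsize a <= dd.
Implicit Types (a b t x y : seqT gT).
Local Notation N := (2 * dd + 2).

Section Linked.
Variable a : seqT gT.
Hypothesis aB : inB G0 a.
Hypothesis IH : forall b, gsize b < gsize a -> forall z z',
  factorization G0 b z -> factorization G0 b z' -> chain G0 N b z z'.

Definition linked x y := forall z z', factorization G0 a z -> x \in z ->
  factorization G0 a z' -> y \in z' -> chain G0 N a z z'.

Lemma linked_refl x : linked x x.
Proof.
move=> z z' fz xz fz' xz'; have [x_atom le_xa] := factorization_mem fz xz.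
have lt_ax : gsize (seq_diff a x) < gsize a.
  by rewrite gsize_diff //; have := atom_gsize_gt0 x_atom; have := leq_gsize le_xa; lia.
have := IH lt_ax (factorization_rem fz xz) (factorization_rem fz' xz').
move=> /(chain_cons_atom x_atom le_xa) chain_rem.
apply: chain_trans (chain_perm fz (perm_to_rem xz)) (chain_trans chain_rem _).
apply: chain_perm; last by rewrite perm_sym perm_to_rem.
exact: factorization_perm (perm_to_rem xz') fz'.
Qed.

Lemma factorization_with x y : atomB G0 x -> atomB G0 y -> seq_le (seq_add x y) a ->
  exists z, [/\ factorization G0 a z, x \in z & y \in z].
Proof.
move=> x_atom y_atom le_xya.
have xyB := inB_add abG sG0 (proj1 x_atom) (proj1 y_atom).
have [z fz] := factorization_exists abG sG0 (inB_diff abG sG0 aB le_xya xyB).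
exists [:: x, y & z]; rewrite !inE !eqxx orbT; split=> //.
have le_xa : seq_le x a by move=> g; have := le_xya g; rewrite ffunE; lia.
have le_ya : seq_le y (seq_diff a x).
  by move=> g; have := le_xya g; rewrite !ffunE; lia.
have a_xy : seq_diff a (seq_add x y) = seq_diff (seq_diff a x) y.
  by apply: seq_ext => g; rewrite !ffunE subnDA.
by rewrite a_xy in fz; do 2 apply: factorization_cons => //.
Qed.

Lemma linked_adj x y : atomB G0 x -> atomB G0 y -> seq_le (seq_add x y) a -> linked x y.
Proof.
move=> x_atom y_atom le_xya z z' fz xz fz' yz'.
have [w [fw xw yw]] := factorization_with x_atom y_atom le_xya.
exact: chain_trans (linked_refl fz xz fw xw) (linked_refl fw yw fz' yz').
Qed.

Lemma linked_trans x y w :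
  atomB G0 y -> seq_le y a -> linked x y -> linked y w -> linked x w.
Proof.
move=> y_atom le_ya xy yw z z' fz xz fz' wz'.
have [v fv] := factorization_exists abG sG0 (inB_diff abG sG0 aB le_ya (proj1 y_atom)).
have fyv := factorization_cons y_atom le_ya fv.
exact: chain_trans (xy _ _ fz xz fyv (mem_head _ _)) (yw _ _ fyv (mem_head _ _) fz' wz').
Qed.

Lemma linked_atoms x x' : N < gsize a -> atomB G0 x -> atomB G0 x' ->
  seq_le x a -> seq_le x' a -> linked x x'.
Proof.
move=> long; have [m] := ubnP (gsize (overlap a x x')).
elim: m x x' => // m IHm x x' lt_m x_atom x'_atom le_xa le_x'a.
have [|h_gt0] := posnP (gsize (overlap a x x')).
  by move/overlap_eq0; apply: linked_adj.
have atom_short := atom_gsize_le abG sG0 zs_free_le.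
have long_atom := long_seq_atom_le abG sG0 zs_free_le.
have [A [A' [le_xA le_A'x' szA szA' lt_AA']]] := overlap_exchange le_xa le_x'a
  (atom_short _ x_atom) (atom_short _ x'_atom) ltac:(lia) h_gt0.
have le_Aa : seq_le A a by move=> g; have := le_xA g; rewrite ffunE; lia.
have le_A'a : seq_le A' a by move=> g; have := le_A'x' g; rewrite ffunE; lia.
have [t [t_atom le_tA]] := long_atom _ (over_le le_Aa (proj1 aB)) ltac:(lia).
have [t' [t'_atom le_tA']] := long_atom _ (over_le le_A'a (proj1 aB)) ltac:(lia).
have le_xta : seq_le (seq_add x t) a.
  by move=> g; have := le_xA g; have := le_tA g; rewrite !ffunE; lia.
have le_t'x'a : seq_le (seq_add t' x') a.
  by move=> g; have := le_A'x' g; have := le_tA' g; rewrite !ffunE; lia.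
have le_ta : seq_le t a := seq_le_trans le_tA le_Aa.
have le_t'a : seq_le t' a := seq_le_trans le_tA' le_A'a.
have tt' : linked t t'.
  apply: IHm => //; have := leq_gsize_overlap a le_tA le_tA'; lia.
apply: linked_trans t_atom le_ta (linked_adj x_atom t_atom le_xta) _.
exact: linked_trans t'_atom le_t'a tt' (linked_adj t'_atom x'_atom le_t'x'a).
Qed.

End Linked.

Lemma chain_factorizations a z z' : factorization G0 a z -> factorization G0 a z' ->
  chain G0 N a z z'.
Proof.
have [n] := ubnP (gsize a); elim: n a z z' => // n IHn a z z' lt_an fz fz'.
have aB : inB G0 a.
  by case/factorizationE: (fz) => atoms ->; apply: (inB_sum abG sG0).
have sz_z := factorization_gsize fz; have sz_z' := factorization_gsize fz'.
have [short|long] := leqP (gsize a) N.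
  apply: (chain_cons (y := z')) fz _ (chain_nil fz').
  have eq_sz : \sum_(x <- z) gsize x = \sum_(x <- z') gsize x by rewrite sz_z sz_z'.
  by apply: leq_trans (d_gr_le eq_sz) _; rewrite sz_z.
case: z fz sz_z => [|x z] fz sz_z; first by move: sz_z; rewrite big_nil; lia.
case: z' fz' sz_z' => [|x' z'] fz' sz_z'; first by move: sz_z'; rewrite big_nil; lia.
have [x_atom le_xa] := factorization_mem fz (mem_head _ _).
have [x'_atom le_x'a] := factorization_mem fz' (mem_head _ _).
have IH b : gsize b < gsize a -> forall w w',
    factorization G0 b w -> factorization G0 b w' -> chain G0 N b w w'.
  by move=> lt_ba w w'; apply: IHn; lia.
have := linked_atoms aB IH long x_atom x'_atom le_xa le_x'a.
by apply; rewrite ?mem_head.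
Qed.

Lemma gr_catenary_zs_free_bound : gr_catenary G0 N.
Proof. by move=> a z z' fz fz'; apply/chainP/chain_factorizations. Qed.

End Catenary.

Section PrefixProducts.
Variables (gT : finGroupType) (G : {group gT}).

Lemma prod1_infix (s : seq gT) : {subset s <= G} -> #|G| <= size s ->
  exists s1 s2 s3, [/\ s = s1 ++ s2 ++ s3, s2 != [::] & (\prod_(y <- s2) y)%g = 1%g].
Proof.
move=> sG long; pose p k := (\prod_(y <- take k s) y)%g.
have : ~~ uniq [seq p k | k <- iota 0 #|G|.+1].
  apply/negP => p_uniq.
  suff /(uniq_leq_size p_uniq) : {subset [seq p k | k <- iota 0 #|G|.+1] <= enum G}.
    by rewrite size_map size_iota -cardE ltnn.
  move=> _ /mapP [k _ ->]; rewrite mem_enum /p big_seq.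
  by apply: group_prod => y /mem_take /sG.
case/(uniqPn 1%g) => i [j [lt_ij]]; rewrite size_map size_iota => lt_j.
have lt_i : i < #|G|.+1 by lia.
rewrite (nth_map 0) ?size_iota // (nth_map 0) ?size_iota // !nth_iota // !add0n => eq_pij.
have take_j : take j s = take i s ++ drop i (take j s).
  by rewrite -{1}(cat_take_drop i (take j s)) take_takel // ltnW.
exists (take i s), (drop i (take j s)), (drop j s); split.
- by rewrite catA -take_j cat_take_drop.
- rewrite -size_eq0 size_drop size_takel ?subn_eq0 -?ltnNge //.
  by apply: leq_trans long; rewrite -ltnS.
- by apply: (mulgI (p i)); rewrite mulg1 {2}eq_pij /p [in RHS]take_j big_cat.
Qed.

End PrefixProducts.

Section DavenportBound.
Variables (gT : finGroupType) (G : {group gT}).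
Hypothesis abG : abelian G.
Implicit Types (a x : seqT gT) (s : seq gT).

Definition mset s : seqT gT := [ffun g => count_mem g s].

Lemma mset_cat s1 s2 : mset (s1 ++ s2) = seq_add (mset s1) (mset s2).
Proof. by apply: seq_ext => g; rewrite !ffunE count_cat. Qed.

Lemma mset_cons u s : mset (u :: s) = seq_add (seq1 u) (mset s).
Proof. by apply: seq_ext => g; rewrite !ffunE /= eq_sym. Qed.

Lemma gsize_mset s : gsize (mset s) = size s.
Proof.
elim: s => [|u s IHs]; first by rewrite /gsize big1 // => g _; rewrite ffunE.
by rewrite mset_cons gsize_add gsize1 IHs.
Qed.

Lemma seqprod_mset s : {subset s <= G} -> seqprod (mset s) = (\prod_(y <- s) y)%g.
Proof.
elim: s => [|u s IHs] sG.
  by rewrite big_nil /seqprod big1 // => g _; rewrite ffunE.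
have sG' : {subset s <= G} by move=> y ys; apply: sG; rewrite inE ys orbT.
have msG : Defs.over G (mset s).
  by move=> g gNG; rewrite ffunE; apply/count_memPn/(contra (sG' g)).
have uG : u \in G by apply: sG; rewrite mem_head.
by rewrite mset_cons (seqprod_add abG (over_seq1 uG) msG) seqprod1 IHs // big_cons.
Qed.

Lemma mset_surj a : Defs.over G a -> exists2 s, mset s = a & {subset s <= G}.
Proof.
have [n] := ubnP (gsize a); elim: n a => // n IHn a sz_a aG.
have [a0|a_nz] := classic (is_zero a).
  by exists [::] => //; apply: seq_ext => g; rewrite ffunE a0.
have [g ag_gt0] := nonzero_support a_nz.
have gG : g \in G by apply: contraLR ag_gt0 => /aG ->.
have le_ga := seq1_le ag_gt0.
have sz_ag : gsize (seq_diff a (seq1 g)) < n.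
  by rewrite gsize_diff // gsize1; have := gsize_gt0 a_nz; lia.
have agG : Defs.over G (seq_diff a (seq1 g)) by move=> h hNG; rewrite ffunE aG.
have [s ms sG] := IHn _ sz_ag agG.
by exists (g :: s); [rewrite mset_cons ms seq_diffK | move=> y /predU1P [->|/sG]].
Qed.

Lemma zero_sum_subseq a : Defs.over G a -> #|G| <= gsize a ->
  exists b, [/\ seq_le b a, seqprod b = 1%g & ~ is_zero b].
Proof.
move=> aG long; have [s ms sG] := mset_surj aG.
have long_s : #|G| <= size s by rewrite -gsize_mset ms.
have [s1 [s2 [s3 [def_s s2_nil s2_1]]]] := prod1_infix sG long_s.
have s2G : {subset s2 <= G} by move=> y ys2; apply: sG; rewrite def_s !mem_cat ys2 orbT.
exists (mset s2); split.
- by move=> g; rewrite -ms def_s !mset_cat !ffunE; lia.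
- by rewrite seqprod_mset.
- by move/gsize_eq0/eqP; rewrite gsize_mset size_eq0 (negbTE s2_nil).
Qed.

Lemma zs_free_gsize_lt (G0 : {set gT}) a : G0 \subset G -> zs_free G0 a -> gsize a < #|G|.
Proof.
move=> sG0 [aG0 a_free]; rewrite ltnNge; apply/negP => long.
have [b [le_ba b1 b_nz]] := zero_sum_subseq (over_subset sG0 aG0) long.
exact/b_nz/a_free.
Qed.

Lemma atom_gsize_le_card (G0 : {set gT}) x :
  G0 \subset G -> atomB G0 x -> gsize x <= #|G|.
Proof.
move=> sG0 x_atom; rewrite -(prednK (cardG_gt0 G)).
by apply: (atom_gsize_le abG sG0 _ x_atom) => a /(zs_free_gsize_lt sG0); lia.
Qed.

Lemma zs_free0 (G0 : {set gT}) : zs_free G0 (seq0 gT).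
Proof.
split=> [g _ | b le_b0 _ g]; first by rewrite ffunE.
by apply/eqP; rewrite -leqn0; have := le_b0 g; rewrite ffunE.
Qed.

(* If a + [u] = b + c, one of b, c misses the copy of u, hence is a zero-sum
   subsequence of a, hence is zero. *)
Lemma zs_free_extend_atom (G0 : {set gT}) a : G0 \subset G -> zs_free G0 a ->
  atomB G (seq_add a (seq1 (seqprod a)^-1)).
Proof.
move=> sG0 [aG0 a_free]; set u := ((seqprod a)^-1)%g.
have aG := over_subset sG0 aG0.
have uG : Defs.over G (seq1 u) by apply/over_seq1; rewrite groupV seqprod_in.
split; [split | split].
- by move=> g gNG; rewrite ffunE aG // uG.
- by rewrite (seqprod_add abG aG uG) seqprod1 mulgV.
- by move=> au0; have := au0 u; rewrite !ffunE eqxx addn1.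
- move=> b c [_ b1] [_ c1] a_bc.
  have [le_bu|lt_ub] := leqP (b u) (a u); [left | right]; apply: a_free => // g;
    by have := a_bc g; rewrite !ffunE; case: eqP => [->|_]; lia.
Qed.

End DavenportBound.

Lemma ex_minn_prop (P : nat -> Prop) n : P n -> exists m, P m /\ forall k, P k -> m <= k.
Proof.
have [b] := ubnP n; elim: b n => // b IHb n lt_nb Pn.
have [[k [lt_kn Pk]]|no_smaller] := classic (exists k, k < n /\ P k).
  by apply: (IHb k) => //; lia.
exists n; split=> // k Pk; rewrite leqNgt; apply/negP => lt_kn.
by apply: no_smaller; exists k.
Qed.

Lemma ex_maxn_prop (P : nat -> Prop) n B : P n -> (forall m, P m -> m <= B) ->
  exists m, P m /\ forall k, P k -> k <= m.
Proof.
move=> Pn; elim: B => [|B IHB] le_B; first by exists n; split=> // k /le_B; lia.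
have [PB|NPB] := classic (P B.+1); first by exists B.+1.
apply: IHB => m Pm; have := le_B m Pm; rewrite leq_eqVlt => /predU1P [eq_mB|//].
by rewrite eq_mB in Pm.
Qed.

Section Existence.
Variables (gT : finGroupType) (G : {group gT}) (G0 : {set gT}).
Hypotheses (abG : abelian G) (sG0 : G0 \subset G).

Lemma small_d_exists : exists dd, is_small_d G0 dd.
Proof.
pose P m := exists a, zs_free G0 a /\ gsize a = m.
have P0 : P 0 by exists (seq0 gT); split; [exact: zs_free0 | exact: gsize0].
have P_le m : P m -> m <= #|G|.
  by case=> a [a_free <-]; apply/ltnW/(zs_free_gsize_lt abG sG0).
have [dd [[a [a_free sz_a]] dd_max]] := ex_maxn_prop P0 P_le.
by exists dd; split=> [|b b_free]; [exists a | apply: dd_max; exists b].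
Qed.

Lemma davenport_exists : exists DD, is_davenport G DD.
Proof.
pose P m := exists x, atomB G x /\ gsize x = m.
have P1 : P 1.
  exists (seq_add (seq0 gT) (seq1 (seqprod (seq0 gT))^-1)).
  rewrite gsize_add gsize0 gsize1.
  by have := zs_free_extend_atom abG (subxx G) (zs_free0 G).
have P_le m : P m -> m <= #|G|.
  by case=> x [x_atom <-]; have := atom_gsize_le_card abG (subxx (G : {set gT})) x_atom.
have [DD [[x [x_atom sz_x]] DD_max]] := ex_maxn_prop P1 P_le.
by exists DD; split=> [|y y_atom]; [exists x | apply: DD_max; exists y].
Qed.

Lemma cgr_exists d : gr_catenary G0 d -> exists c, is_cgr G0 c.
Proof. by move=> /ex_minn_prop [c [cat_c c_min]]; exists c. Qed.

Lemma small_d_lt_davenport dd DD :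
  is_small_d G0 dd -> is_davenport G DD -> dd < DD.
Proof.
move=> [[a [a_free <-]] _] [_ DD_max].
by have := DD_max _ (zs_free_extend_atom abG sG0 a_free); rewrite gsize_add gsize1 addn1.
Qed.

Lemma davenport_le_card DD : is_davenport G DD -> DD <= #|G|.
Proof.
move=> [[x [x_atom <-]] _].
by have := atom_gsize_le_card abG (subxx (G : {set gT})) x_atom.
Qed.

End Existence.

Theorem corollary6p4 (gT : finGroupType) (G : {group gT}) (G0 : {set gT}) :
  abelian G -> G0 \subset G ->
  exists c dd DD : nat,
    [/\ is_cgr G0 c, is_small_d G0 dd & is_davenport (G : {set gT}) DD] /\
    [/\ c <= 2 * dd + 2, 2 * dd + 2 <= 2 * DD & 2 * DD <= 2 * #|G|].
Proof.
move=> abG sG0.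
have [dd small_d] := small_d_exists abG sG0.
have [DD davG] := davenport_exists abG.
have catenary := gr_catenary_zs_free_bound abG sG0 (proj2 small_d).
have [c cgr] := cgr_exists catenary.
exists c, dd, DD; split=> //.
have := proj2 cgr _ catenary.
have := small_d_lt_davenport abG sG0 small_d davG.
have := davenport_le_card abG davG.
by split; lia.
Qed.
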